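(* The functor $B\colon\mathbf{Set}^{\mathbb{O}}\to\mathbf{Set}^{\mathbb{O}}$, $BP=\mathcal{P}_f(\mathcal{L}\times\Delta P)$, is accessible (preserves filtered colimits) and covers pullbacks.
   Context: Fix a finite set $Act$ of action labels. An $Act$-labelled poset is $O=(X_O,\preccurlyeq_O,l_O)$ with $\preccurlyeq_O$ a partial order and $l_O\colon X_O\to Act$; $|O|=\{(x,l_O(x))\}$. Morphisms preserve order and labels; order-embeddings additionally reflect order. $\mathcal{O}$ is the skeletal category of finite $Act$-labelled posets and morphisms, and $\mathbb{O}$ its subcategory (same objects) with only order-embeddings as morphisms. Event allocation functor $\boldsymbol{\delta}\colon\mathbb{O}\to\mathbb{O}$: for an object $O$, $\boldsymbol{\delta}(O)$ is (the representative in $\mathbb{O}$ of) the poset obtained from $O$ by adding, for every antichain $K\subseteq|O|$ (including $K=\emptyset$) and every $a\in Act$, a fresh event $new(O,K,a)$ with label $a$ placed above exactly the elements of $K$ (then taking reflexive-transitive closure); $old(O)\colon O\to\boldsymbol{\delta}(O)$ is the embedding of $O$. For an order-embedding $\sigma\colon O\to O'$, $\boldsymbol{\delta}(\sigma)\colon\boldsymbol{\delta}(O)\to\boldsymbol{\delta}(O')$ acts as $\sigma$ on old events and sends $new(O,K,a)$ to $new(O',\sigma(K),a)$. $\mathbf{Set}^{\mathbb{O}}$ is the category of functors $\mathbb{O}\to\mathbf{Set}$ and natural transformations. $\mathcal{E}\in\mathbf{Set}^{\mathbb{O}}$ maps $O$ to $|O|$ and $\sigma$ to the renaming $x_a\mapsto\sigma(x)_a$.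 $\mathcal{P}_f\colon\mathbf{Set}^{\mathbb{O}}\to\mathbf{Set}^{\mathbb{O}}$ is postcomposition with the finite powerset functor on $\mathbf{Set}$ (direct images on maps). $\Delta\colon\mathbf{Set}^{\mathbb{O}}\to\mathbf{Set}^{\mathbb{O}}$ is $\Delta P=P\circ\boldsymbol{\delta}$. $\mathcal{L}(O)=Act\times\mathcal{P}_f(\mathcal{E}(O))$ with $\mathcal{L}(\sigma)(a,K)=(a,\sigma(K))$. Products in $\mathbf{Set}^{\mathbb{O}}$ are pointwise. In $\mathbf{Set}^{\mathbb{O}}$ images are computed pointwise, and a cover is a morphism whose image is its whole codomain (a pointwise surjective natural transformation). $B$ covers pullbacks if for every cospan $X_1\to X_3\leftarrow X_2$ with pullback $P$ (projections $\pi_1,\pi_2$), the canonical morphism $BP\to P'$ into the pullback $P'$ of $BX_1\to BX_3\leftarrow BX_2$, induced by $B\pi_1,B\pi_2$, is a cover. *)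

From HB Require Import structures.
From mathcomp Require Import all_boot.
From mathcomp Require Import boolp classical_sets cardinality.

Set Implicit Arguments.
Unset Strict Implicit.
Unset Printing Implicit Defensive.

Section Objects.
Variable Act : finType.

Record lposet := LPoset {
  car : finType;
  le : rel car;
  lab : car -> Act;
  le_refl : reflexive le;
  le_anti : antisymmetric le;
  le_trans : transitive le }.

Record emb (O O' : lposet) := Emb {
  emb_fun :> car O -> car O';
  emb_lab : forall x, lab (emb_fun x) = lab x;
  emb_le : forall x y, le (emb_fun x) (emb_fun y) = le x y }.

Definition id_emb (O : lposet) : emb O O :=
  @Emb O O id (fun _ => erefl) (fun _ _ => erefl).

Lemma comp_emb_lab O1 O2 O3 (g : emb O2 O3) (f : emb O1 O2) x :
  lab (g (f x)) = lab x.
Proof. by rewrite !emb_lab. Qed.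

Lemma comp_emb_le O1 O2 O3 (g : emb O2 O3) (f : emb O1 O2) x y :
  le (g (f x)) (g (f y)) = le x y.
Proof. by rewrite !emb_le. Qed.

Definition comp_emb O1 O2 O3 (g : emb O2 O3) (f : emb O1 O2) : emb O1 O3 :=
  @Emb O1 O3 (fun x => g (f x)) (comp_emb_lab g f) (comp_emb_le g f).

Lemma emb_inj O O' (f : emb O O') : injective f.
Proof.
move=> x y fxy; apply: (@le_anti O); apply/andP; split.
  by rewrite -(emb_le f) fxy le_refl.
by rewrite -(emb_le f) fxy le_refl.
Qed.

Definition antichain (O : lposet) (K : {set car O}) : bool :=
  [forall x in K, forall y in K, le x y ==> (x == y)].

Definition AC (O : lposet) := {K : {set car O} | antichain K}.

(* carrier of δ(O): old events  inl x,  new events  inr (K, a) = new(O,K,a) *)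
Definition dcar (O : lposet) : finType := (car O + (AC O * Act))%type.

(* order of δ(O): reflexive-transitive closure of
   (order of O) ∪ { (k, new(O,K,a)) | k ∈ K }, written out explicitly *)
Definition dle (O : lposet) : rel (dcar O) := fun u v =>
  match u, v with
  | inl x, inl y => le x y
  | inl x, inr (K, _) => [exists k in sval K, le x k]
  | inr _, inl _ => false
  | inr p, inr q => p == q
  end.

Definition dlab (O : lposet) (u : dcar O) : Act :=
  match u with inl x => lab x | inr (_, a) => a end.

Lemma dle_refl O : reflexive (@dle O).
Proof. by case=> [x|p] /=; rewrite ?le_refl ?eqxx. Qed.

Lemma dle_anti O : antisymmetric (@dle O).
Proof.
case=> [x|[K a]] [y|[K' b]] //=.
- by move=> /le_anti ->.
- by rewrite andbF.
- by case/andP=> /eqP ->.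
Qed.

Lemma dle_trans O : transitive (@dle O).
Proof.
move=> y x z; case: x y z => [x|p] [y|q] [z|r] //=.
- exact: le_trans.
- case: r => K a /= lxy /existsP [k /andP [kK lyk]]; apply/existsP; exists k.
  by rewrite kK (le_trans lxy lyk).
- by case: q => K a; case: r => K2 b /= h /eqP [<- _].
- by move=> /eqP -> /eqP ->.
Qed.

Definition delta (O : lposet) : lposet :=
  @LPoset (dcar O) (@dle O) (@dlab O) (@dle_refl O) (@dle_anti O) (@dle_trans O).

Lemma AC_map_proof O O' (f : emb O O') (K : AC O) : antichain (f @: sval K).
Proof.
apply/forallP=> x'; apply/implyP=> /imsetP [x xK ->].
apply/forallP=> y'; apply/implyP=> /imsetP [y yK ->].
rewrite emb_le; apply/implyP=> lxy.
have /forallP /(_ x) := svalP K; rewrite xK /= => /forallP /(_ y).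
by rewrite yK lxy /= => /eqP ->.
Qed.

Definition AC_map O O' (f : emb O O') (K : AC O) : AC O' :=
  exist _ (f @: sval K) (AC_map_proof f K).

Definition delta_fun O O' (f : emb O O') (u : dcar O) : dcar O' :=
  match u with
  | inl x => inl (f x)
  | inr (K, a) => inr (AC_map f K, a)
  end.

Lemma delta_fun_lab O O' (f : emb O O') u :
  dlab (delta_fun f u) = dlab u.
Proof. by case: u => [x|[K a]] //=; rewrite emb_lab. Qed.

Lemma delta_fun_le O O' (f : emb O O') u v :
  dle (delta_fun f u) (delta_fun f v) = dle u v.
Proof.
case: u v => [x|[K a]] [y|[K' b]] //=.
- exact: emb_le.
- apply/existsP/existsP => [[k' /andP [/imsetP [k kK ->]]]|[k /andP [kK lxk]]].
    by rewrite emb_le => lxk; exists k; rewrite kK.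
  by exists (f k); rewrite (imset_f f kK) emb_le.
- apply/eqP/eqP => [[eK ->]|[-> ->]] //; congr (_, _).
  apply: val_inj => /=; move: eK.
  exact: (imset_inj (@emb_inj _ _ f)).
Qed.

Definition delta_emb O O' (f : emb O O') : emb (delta O) (delta O') :=
  @Emb (delta O) (delta O') (delta_fun f) (delta_fun_lab f) (delta_fun_le f).

Record psh := Psh {
  F0 :> lposet -> Type;
  F1 : forall O O', emb O O' -> F0 O -> F0 O' }.

Definition is_functor (F : psh) : Prop :=
  (forall O (x : F O), F1 (id_emb O) x = x) /\
  (forall O1 O2 O3 (f : emb O1 O2) (g : emb O2 O3) (x : F O1),
      F1 (comp_emb g f) x = F1 g (F1 f x)).

Definition nat_tr (F G : psh) := forall O, F O -> G O.

Definition is_nat (F G : psh) (al : nat_tr F G) : Prop :=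
  forall O O' (f : emb O O') (x : F O), al O' (F1 f x) = F1 f (al O x).

Definition Pf (T : Type) := {A : set T | finite_set A}.

Definition Pf_map (T T' : Type) (f : T -> T') (A : Pf T) : Pf T' :=
  exist _ (image (sval A) f) (finite_image f (svalP A)).

Definition E : psh := @Psh (fun O => car O) (fun O O' f x => f x).

Definition PfF (P : psh) : psh :=
  @Psh (fun O => Pf (P O)) (fun O O' f => Pf_map (F1 f)).

Definition Lf : psh :=
  @Psh (fun O => (Act * Pf (car O))%type)
       (fun O O' f al => (al.1, Pf_map f al.2)).

Definition Delta (P : psh) : psh :=
  @Psh (fun O => P (delta O)) (fun O O' f => F1 (delta_emb f)).

Definition prodF (P Q : psh) : psh :=
  @Psh (fun O => (P O * Q O)%type) (fun O O' f pq => (F1 f pq.1, F1 f pq.2)).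

Definition B (P : psh) : psh := PfF (prodF Lf (Delta P)).

Definition Bmap (P Q : psh) (al : nat_tr P Q) : nat_tr (B P) (B Q) :=
  fun O => Pf_map (fun lp : (Act * Pf (car O)) * P (delta O) =>
                     (lp.1, al (delta O) lp.2)).

End Objects.
Arguments Bmap {Act P Q} al O.

Record cat := Cat {
  cob : Type;
  chom : cob -> cob -> Type;
  cid : forall a, chom a a;
  ccomp : forall a b c, chom b c -> chom a b -> chom a c }.

Definition is_cat (C : cat) : Prop :=
  (forall (a b : cob C) (f : chom a b), ccomp (cid b) f = f) /\
  (forall (a b : cob C) (f : chom a b), ccomp f (cid a) = f) /\
  (forall (a b c d : cob C) (f : chom a b) (g : chom b c) (h : chom c d),
      ccomp h (ccomp g f) = ccomp (ccomp h g) f).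

Definition filtered (C : cat) : Prop :=
  inhabited (cob C) /\
  (forall a b : cob C, exists c, inhabited (chom a c) /\ inhabited (chom b c)) /\
  (forall (a b : cob C) (f g : chom a b), exists c (h : chom b c), ccomp h f = ccomp h g).

Section Colimits.
Variable Act : finType.
Variable J : cat.

Record diagram := Diagram {
  D0 : cob J -> psh Act;
  D1 : forall j k, chom j k -> nat_tr (D0 j) (D0 k) }.

Arguments D1 d {j k} _.
Arguments D0 d j.

Definition is_diagram (D : diagram) : Prop :=
  (forall j, is_functor (D0 D j)) /\
  (forall j k (f : chom j k), is_nat (D1 D f)) /\
  (forall j O (x : D0 D j O), D1 D (cid j) O x = x) /\
  (forall j k l (f : chom j k) (g : chom k l) O (x : D0 D j O),
      D1 D (ccomp g f) O x = D1 D g O (D1 D f O x)).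

Definition is_cocone (D : diagram) (L : psh Act)
    (iota : forall j, nat_tr (D0 D j) L) : Prop :=
  (forall j, is_nat (iota j)) /\
  (forall j k (f : chom j k) O (x : D0 D j O), iota k O (D1 D f O x) = iota j O x).

Arguments is_cocone D L iota : clear implicits.

Definition is_colimit (D : diagram) (L : psh Act)
    (iota : forall j, nat_tr (D0 D j) L) : Prop :=
  is_cocone D L iota /\
  forall (M : psh Act) (mu : forall j, nat_tr (D0 D j) M),
    is_functor M -> is_cocone D M mu ->
    (exists u : nat_tr L M, is_nat u /\
        forall j O (x : D0 D j O), u O (iota j O x) = mu j O x) /\
    (forall u v : nat_tr L M, is_nat u -> is_nat v ->
        (forall j O (x : D0 D j O), u O (iota j O x) = mu j O x) ->
        (forall j O (x : D0 D j O), v O (iota j O x) = mu j O x) ->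
        forall O (y : L O), u O y = v O y).

Arguments is_colimit D L iota : clear implicits.

Definition Bdiag (D : diagram) : diagram :=
  @Diagram (fun j => B (D0 D j)) (fun j k f => Bmap (D1 D f)).

End Colimits.
Arguments is_cocone {Act J} D L iota.
Arguments is_colimit {Act J} D L iota.

Definition B_preserves_filtered_colimits (Act : finType) : Prop :=
  forall (J : cat) (D : diagram Act J) (L : psh Act)
         (iota : forall j, nat_tr (D0 D j) L),
    is_cat J -> filtered J -> is_diagram D -> is_functor L ->
    is_colimit D L iota ->
    is_colimit (Bdiag D) (B L) (fun j => Bmap (iota j)).

Section Pullbacks.
Variable Act : finType.

Definition is_pullback (X1 X2 X3 P : psh Act)
    (f1 : nat_tr X1 X3) (f2 : nat_tr X2 X3)
    (p1 : nat_tr P X1) (p2 : nat_tr P X2) : Prop :=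
  is_nat p1 /\ is_nat p2 /\
  (forall O (x : P O), f1 O (p1 O x) = f2 O (p2 O x)) /\
  forall (Q : psh Act) (q1 : nat_tr Q X1) (q2 : nat_tr Q X2),
    is_functor Q -> is_nat q1 -> is_nat q2 ->
    (forall O (x : Q O), f1 O (q1 O x) = f2 O (q2 O x)) ->
    (exists u : nat_tr Q P, is_nat u /\
        (forall O x, p1 O (u O x) = q1 O x) /\ (forall O x, p2 O (u O x) = q2 O x)) /\
    (forall u v : nat_tr Q P, is_nat u -> is_nat v ->
        (forall O x, p1 O (u O x) = q1 O x) -> (forall O x, p2 O (u O x) = q2 O x) ->
        (forall O x, p1 O (v O x) = q1 O x) -> (forall O x, p2 O (v O x) = q2 O x) ->
        forall O x, u O x = v O x).

Definition is_cover (F G : psh Act) (u : nat_tr F G) : Prop :=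
  forall O (y : G O), exists x : F O, u O x = y.

Definition B_covers_pullbacks : Prop :=
  forall (X1 X2 X3 : psh Act) (f1 : nat_tr X1 X3) (f2 : nat_tr X2 X3),
    is_functor X1 -> is_functor X2 -> is_functor X3 -> is_nat f1 -> is_nat f2 ->
  forall (P : psh Act) (p1 : nat_tr P X1) (p2 : nat_tr P X2),
    is_functor P -> is_pullback f1 f2 p1 p2 ->
  forall (P' : psh Act) (p1' : nat_tr P' (B X1)) (p2' : nat_tr P' (B X2)),
    is_functor P' -> is_pullback (Bmap f1) (Bmap f2) p1' p2' ->
  forall u : nat_tr (B P) P',
    (forall O x, p1' O (u O x) = Bmap p1 O x) ->
    (forall O x, p2' O (u O x) = Bmap p2 O x) ->
    is_cover u.

End Pullbacks.

From Pilot Require Import Defs.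
From mathcomp Require Import all_boot.
From mathcomp Require Import boolp classical_sets cardinality.
From Stdlib Require List.

Set Implicit Arguments.
Unset Strict Implicit.
Unset Printing Implicit Defensive.
Local Open Scope classical_set_scope.

(* Limits and colimits in Set^𝕆 are computed pointwise.  Testing the universal
   property of a pullback against the representable functor Hom(O, -) shows
   that its component at O is a pullback of sets; comparing a colimiting cocone
   with its image and with the quotient of its germs shows that, for a filtered
   diagram, every element of the colimit at O comes from some stage, and two
   elements are identified exactly when they become equal at a later stage.
   As L × Δ- acts componentwise, (B P)(O) consists of the finite sets of
   labelled elements of P(δ O).  A finite subset of a filtered colimit involves
   finitely many elements and finitely many identifications, all realised at
   a single stage, which gives preservation of filtered colimits.  Two finite
   sets of labelled elements with the same image in X3 are the images of the
   set of labelled elements of the pullback lying over both, which is finite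
   because the pullback projections are jointly injective. *)

Lemma sig_eq T (P : T -> Prop) (a b : {x | P x}) : sval a = sval b -> a = b.
Proof. by case: a b => a pa [b pb] /= ab; apply: eq_exist. Qed.

Lemma finite_set_In T (A : set T) :
  finite_set A <-> exists s : seq T, A = [set x | List.In x s].
Proof.
have In_mem (s : seq {classic T}) : [set x | List.In x s] = [set` s].
  rewrite predeqE => x /=; elim: s => [|y s IH] /=; first by rewrite in_nil.
  rewrite in_cons; split=> [[->|/IH ->]|/orP[/eqP ->|/IH]]; rewrite ?eqxx ?orbT; auto.
rewrite (@finite_seqP {classic T}).
by split=> -[s As]; exists s; rewrite As In_mem.
Qed.

Lemma image_In_map T U (f : T -> U) (s : seq T) :
  f @` [set x | List.In x s] = [set y | List.In y (map f s)].
Proof.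
rewrite predeqE => y /=; rewrite List.in_map_iff.
by split=> [[x sx <-]|[x [<- sx]]]; exists x.
Qed.

Lemma Pf_map_comp T1 T2 T3 (f : T1 -> T2) (g : T2 -> T3) A :
  Pf_map g (Pf_map f A) = Pf_map (fun x => g (f x)) A.
Proof. by apply: sig_eq; rewrite /= image_comp. Qed.

Lemma Pf_map_ext T1 T2 (f g : T1 -> T2) A :
  (forall x, sval A x -> f x = g x) -> Pf_map f A = Pf_map g A.
Proof. by move=> fg; apply: sig_eq; apply: eq_imagel. Qed.

Definition lmap (Lb X Y : Type) (f : X -> Y) (t : Lb * X) : Lb * Y := (t.1, f t.2).

Section Presheaves.
Variable Act : finType.

Lemma Bmap_val (P Q : psh Act) (al : nat_tr P Q) O (S : B P O) :
  sval (Bmap al O S) = lmap (al (delta O)) @` sval S.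
Proof. by []. Qed.

Lemma Bmap_nat (P Q : psh Act) (al : nat_tr P Q) : is_nat al -> is_nat (Bmap al).
Proof.
move=> al_nat O O' f S; rewrite /= /Bmap !Pf_map_comp.
by apply: Pf_map_ext => x _; rewrite /= al_nat.
Qed.

Lemma Bmap_comp (P Q R : psh Act) (al : nat_tr Q R) (be : nat_tr P Q) O S :
  Bmap al O (Bmap be O S) = Bmap (fun O x => al O (be O x)) O S.
Proof. exact: Pf_map_comp. Qed.

Lemma Bmap_ext (P Q : psh Act) (al be : nat_tr P Q) O S :
  (forall x, al (delta O) x = be (delta O) x) -> Bmap al O S = Bmap be O S.
Proof. by move=> albe; apply: Pf_map_ext => x _; rewrite /= albe. Qed.

Lemma emb_eq (O O' : lposet Act) (e1 e2 : emb O O') : e1 =1 e2 -> e1 = e2.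
Proof.
case: e1 e2 => f1 l1 q1 [f2 l2 q2] /= /funext f12; subst f2.
by congr Emb; apply: Prop_irrelevance.
Qed.

Definition Hom (O : lposet Act) : psh Act :=
  @Psh Act (fun O' => emb O O') (fun O1 O2 h g => comp_emb h g).

Lemma Hom_functor (O : lposet Act) : is_functor (Hom O).
Proof. by split=> *; apply: emb_eq. Qed.

End Presheaves.

Section Pullbacks.
Variable Act : finType.

Lemma pullback_lift (X1 X2 X3 P : psh Act) (f1 : nat_tr X1 X3) (f2 : nat_tr X2 X3)
    (p1 : nat_tr P X1) (p2 : nat_tr P X2) :
  is_pullback f1 f2 p1 p2 -> is_functor X1 -> is_functor X2 -> is_nat f1 -> is_nat f2 ->
  forall O x1 x2, f1 O x1 = f2 O x2 -> exists z, p1 O z = x1 /\ p2 O z = x2.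
Proof.
move=> pbP [X1id X1comp] [X2id X2comp] f1_nat f2_nat O x1 x2 fx12.
have [_ [_ [_ univ]]] := pbP.
pose q1 : nat_tr (Hom O) X1 := fun O' g => F1 g x1.
pose q2 : nat_tr (Hom O) X2 := fun O' g => F1 g x2.
have q1_nat : is_nat q1 by move=> O1 O2 h g; rewrite /q1 /= X1comp.
have q2_nat : is_nat q2 by move=> O1 O2 h g; rewrite /q2 /= X2comp.
have q12 O' (g : Hom O O') : f1 O' (q1 O' g) = f2 O' (q2 O' g).
  by rewrite /q1 /q2 f1_nat f2_nat fx12.
have [[u [_ [up1 up2]]] _] := univ _ q1 q2 (Hom_functor O) q1_nat q2_nat q12.
by exists (u O (id_emb O)); rewrite up1 up2 /q1 /q2 X1id X2id.
Qed.

Lemma pullback_jointly_injective (X1 X2 X3 P : psh Act) (f1 : nat_tr X1 X3)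
    (f2 : nat_tr X2 X3) (p1 : nat_tr P X1) (p2 : nat_tr P X2) :
  is_pullback f1 f2 p1 p2 -> is_functor P ->
  forall O a b, p1 O a = p1 O b -> p2 O a = p2 O b -> a = b.
Proof.
move=> pbP [Pid Pcomp] O a b p1ab p2ab.
have [p1_nat [p2_nat [pcomm univ]]] := pbP.
pose q1 : nat_tr (Hom O) X1 := fun O' g => p1 O' (F1 g a).
pose q2 : nat_tr (Hom O) X2 := fun O' g => p2 O' (F1 g a).
have q1_nat : is_nat q1 by move=> O1 O2 h g; rewrite /q1 /= Pcomp p1_nat.
have q2_nat : is_nat q2 by move=> O1 O2 h g; rewrite /q2 /= Pcomp p2_nat.
have [_ uniq] := univ _ q1 q2 (Hom_functor O) q1_nat q2_nat (fun _ _ => pcomm _ _).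
pose u : nat_tr (Hom O) P := fun O' g => F1 g a.
pose v : nat_tr (Hom O) P := fun O' g => F1 g b.
have u_nat : is_nat u by move=> O1 O2 h g; rewrite /u /= Pcomp.
have v_nat : is_nat v by move=> O1 O2 h g; rewrite /v /= Pcomp.
have := uniq u v u_nat v_nat (fun _ _ => erefl) (fun _ _ => erefl) _ _ O (id_emb O).
rewrite /u /v /= !Pid; apply=> O' g.
- by rewrite /v /q1 p1_nat -p1ab -p1_nat.
- by rewrite /v /q2 p2_nat -p2ab -p2_nat.
Qed.

End Pullbacks.

Lemma image_eq_match T1 T2 U (g1 : T1 -> U) (g2 : T2 -> U) (A1 : set T1) (A2 : set T2) :
  g1 @` A1 = g2 @` A2 -> forall t, A1 t -> exists2 t', A2 t' & g1 t = g2 t'.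
Proof.
move=> gA12 t A1t; have : (g2 @` A2) (g1 t) by rewrite -gA12; exists t.
by case=> t' A2t' <-; exists t'.
Qed.

Lemma image_lmap_pullback (Lb Y1 Y2 Y3 Z : Type) (g1 : Y1 -> Y3) (g2 : Y2 -> Y3)
    (q1 : Z -> Y1) (q2 : Z -> Y2) (A1 : set (Lb * Y1)) (A2 : set (Lb * Y2)) :
  (forall y1 y2, g1 y1 = g2 y2 -> exists z, q1 z = y1 /\ q2 z = y2) ->
  lmap g1 @` A1 = lmap g2 @` A2 ->
  lmap q1 @` (lmap q1 @^-1` A1 `&` lmap q2 @^-1` A2) = A1.
Proof.
move=> lift gA12; rewrite predeqE => -[l y1]; split=> [[t [A1t _] <-] // | A1y].
have [[l' y2] A2y [ll']] := image_eq_match gA12 A1y.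
move=> /lift [z [q1z q2z]]; subst l'.
exists (l, z); last by rewrite /lmap /= q1z.
by rewrite /lmap /= q1z q2z.
Qed.

Lemma B_covers (Act : finType) : B_covers_pullbacks Act.
Proof.
move=> X1 X2 X3 f1 f2 FX1 FX2 _ f1_nat f2_nat P p1 p2 FP pbP P' p1' p2' FP' pbP'
  u up1 up2 O y.
set A1 := sval (p1' O y); set A2 := sval (p2' O y).
have lift := pullback_lift pbP FX1 FX2 f1_nat f2_nat (O := delta O).
have fA12 : lmap (f1 (delta O)) @` A1 = lmap (f2 (delta O)) @` A2.
  by have [_ [_ [pcomm _]]] := pbP'; rewrite -(Bmap_val f1) -(Bmap_val f2) pcomm.
pose T := lmap (p1 (delta O)) @^-1` A1 `&` lmap (p2 (delta O)) @^-1` A2.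
have finT : finite_set T.
  have -> : T = (fun t => (lmap (p1 (delta O)) t, lmap (p2 (delta O)) t))
                   @^-1` (A1 `*` A2) by [].
  apply: finite_preimage; last exact: finite_setX (svalP (p1' O y)) (svalP (p2' O y)).
  move=> [l a] [l' b] _ _ [-> p1ab _ p2ab].
  by rewrite (pullback_jointly_injective pbP FP p1ab p2ab).
exists (exist _ T finT).
apply: (pullback_jointly_injective pbP' FP'); [rewrite up1|rewrite up2]; apply: sig_eq.
- exact: image_lmap_pullback fA12.
- rewrite /= /T setIC; apply: image_lmap_pullback (esym fA12).
  by move=> x2 x1 /esym /lift [z [? ?]]; exists z.
Qed.

Section FilteredCospans.
Variable J : Defs.cat.
Hypothesis J_cat : is_cat J.
Hypothesis J_filtered : filtered J.
Variables j k : cob J.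

Definition cospan_closed (Q : forall l, chom j l -> chom k l -> Prop) : Prop :=
  forall l f g m (h : chom l m), Q l f g -> Q m (ccomp h f) (ccomp h g).

Definition cospan_exists (Q : forall l, chom j l -> chom k l -> Prop) : Prop :=
  exists l f g, Q l f g.

Lemma cospan_exists_and (Q1 Q2 : forall l, chom j l -> chom k l -> Prop) :
  cospan_closed Q1 -> cospan_closed Q2 -> cospan_exists Q1 -> cospan_exists Q2 ->
  cospan_exists (fun l f g => Q1 l f g /\ Q2 l f g).
Proof.
move=> Q1_closed Q2_closed [l1 [f1 [g1 Q1fg]]] [l2 [f2 [g2 Q2fg]]].
have [_ [_ compA]] := J_cat; have [_ [cocone coequalize]] := J_filtered.
have [c [[h1] [h2]]] := cocone l1 l2.
have [d [e ef]] := coequalize _ _ (ccomp h1 f1) (ccomp h2 f2).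
have [d' [e' eg]] := coequalize _ _ (ccomp e (ccomp h1 g1)) (ccomp e (ccomp h2 g2)).
pose u1 := ccomp e' (ccomp e h1); pose u2 := ccomp e' (ccomp e h2).
have u12f : ccomp u1 f1 = ccomp u2 f2 by rewrite -!compA ef.
have u12g : ccomp u1 g1 = ccomp u2 g2 by move: eg; rewrite /u1 /u2 !compA.
exists d', (ccomp u1 f1), (ccomp u1 g1); split; first exact: Q1_closed.
by rewrite u12f u12g; exact: Q2_closed.
Qed.

Lemma cospan_closed_all T (A : set T) (Q : T -> forall l, chom j l -> chom k l -> Prop) :
  (forall t, cospan_closed (Q t)) ->
  cospan_closed (fun l f g => forall t, A t -> Q t l f g).
Proof. by move=> Q_closed l f g m h Qfg t At; apply: Q_closed; exact: Qfg. Qed.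

Lemma cospan_exists_all T (A : set T) (Q : T -> forall l, chom j l -> chom k l -> Prop) :
  finite_set A -> (forall t, cospan_closed (Q t)) ->
  (forall t, A t -> cospan_exists (Q t)) ->
  cospan_exists (fun l f g => forall t, A t -> Q t l f g).
Proof.
move=> /finite_set_In [s ->] {A} Q_closed; elim: s => [|t s IH] Q_exists.
  have [_ [cocone _]] := J_filtered; have [c [[f] [g]]] := cocone j k.
  by exists c, f, g.
have [|l [f [g [Qt Qs]]]] := cospan_exists_and (Q_closed t)
  (cospan_closed_all (A := [set x | List.In x s]) Q_closed)
  (Q_exists t (or_introl erefl)).
  by apply: IH => t' st'; apply: Q_exists; right.
by exists l, f, g => t' /= [<-|]; [exact: Qt|exact: Qs].
Qed.

End FilteredCospans.

Section FilteredColimit.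
Variable Act : finType.
Variable J : Defs.cat.
Variable D : diagram Act J.
Variable L : psh Act.
Variable iota : forall j, nat_tr (D0 D j) L.
Arguments iota : clear implicits.
Arguments D1 {Act J} d {j k} f O x.
Hypothesis J_cat : is_cat J.
Hypothesis J_filtered : filtered J.
Hypothesis D_diagram : is_diagram D.
Hypothesis L_functor : is_functor L.
Hypothesis iota_colimit : is_colimit D L iota.

Lemma D0_functor j : is_functor (D0 D j).
Proof. by have [D0F _] := D_diagram; apply: D0F. Qed.

Lemma D1_nat j k (f : chom j k) : is_nat (D1 D f).
Proof. by have [_ [D1N _]] := D_diagram; apply: D1N. Qed.

Lemma D1_id j O x : D1 D (Defs.cid j) O x = x.
Proof. by have [_ [_ [D1id _]]] := D_diagram; apply: D1id. Qed.

Lemma D1_comp j k l (f : chom j k) (g : chom k l) O x :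
  D1 D (ccomp g f) O x = D1 D g O (D1 D f O x).
Proof. by have [_ [_ [_ D1comp]]] := D_diagram; apply: D1comp. Qed.

Lemma iota_nat j : is_nat (iota j).
Proof. by have [[iotaN _] _] := iota_colimit. Qed.

Lemma iota_cocone j k (f : chom j k) O x : iota k O (D1 D f O x) = iota j O x.
Proof. by have [[_ iotaC] _] := iota_colimit; apply: iotaC. Qed.

Definition iota_image_set O := {y : L O | exists j x, iota j O x = y}.

Lemma iota_image_closed O O' (h : emb O O') (y : iota_image_set O) :
  exists j x, iota j O' x = F1 h (sval y).
Proof.
by case: y => y /= [j [x <-]]; exists j, (F1 h x); apply: iota_nat.
Qed.

Definition iota_image : psh Act :=
  @Psh Act iota_image_set
    (fun O O' h y => exist _ (F1 h (sval y)) (iota_image_closed h y)).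

Lemma iota_image_functor : is_functor iota_image.
Proof.
by case: L_functor => Lid Lcomp; split=> *; apply: sig_eq; rewrite /= ?Lid ?Lcomp.
Qed.

Definition iota_corestr j : nat_tr (D0 D j) iota_image :=
  fun O x => exist _ (iota j O x) (ex_intro _ j (ex_intro _ x erefl)).

(* The inclusion of the image, composed with the factorization of iota
   through it, is an endomorphism of the colimit fixing iota, hence the identity. *)
Lemma iota_surj O (y : L O) : exists j x, iota j O x = y.
Proof.
have corestr_cocone : is_cocone D iota_image iota_corestr.
  split=> [j O1 O2 f x|j k f O1 x]; apply: sig_eq; [exact: iota_nat|exact: iota_cocone].
have [[u [u_nat iota_u]] _] :=
  iota_colimit.2 _ _ iota_image_functor corestr_cocone.
pose w : nat_tr L L := fun O y => sval (u O y).
have w_nat : is_nat w by move=> O1 O2 f z; rewrite /w u_nat.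
have iota_w j O1 (x : D0 D j O1) : w O1 (iota j O1 x) = iota j O1 x by rewrite /w iota_u.
have id_nat : is_nat (fun O (y : L O) => y) by [].
have [_ uniq] := iota_colimit.2 _ _ L_functor iota_colimit.1.
have -> : y = w O y.
  by apply: esym; apply: (uniq w _ w_nat id_nat iota_w).
exact: svalP (u O y).
Qed.

Definition germ O := {j : cob J & D0 D j O}.

Definition germ_eq O (a b : germ O) : Prop :=
  cospan_exists (fun l (f : chom (projT1 a) l) (g : chom (projT1 b) l) =>
    D1 D f O (projT2 a) = D1 D g O (projT2 b)).

Lemma germ_eq_refl O (a : germ O) : germ_eq a a.
Proof. by exists (projT1 a), (Defs.cid _), (Defs.cid _). Qed.

Lemma germ_eq_sym O (a b : germ O) : germ_eq a b -> germ_eq b a.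
Proof. by case=> l [f [g fg]]; exists l, g, f. Qed.

Lemma germ_eq_trans O (a b c : germ O) : germ_eq a b -> germ_eq b c -> germ_eq a c.
Proof.
case=> l1 [f1 [g1 fg1]] [l2 [f2 [g2 fg2]]].
have [_ [cocone coequalize]] := J_filtered.
have [m [[h1] [h2]]] := cocone l1 l2.
have [n [e eg1f2]] := coequalize _ _ (ccomp h1 g1) (ccomp h2 f2).
exists n, (ccomp e (ccomp h1 f1)), (ccomp e (ccomp h2 g2)).
have := congr1 (fun h => D1 D h O (projT2 b)) eg1f2.
by rewrite /= !D1_comp fg1 -fg2.
Qed.

Definition germ_map O O' (h : emb O O') (a : germ O) : germ O' :=
  existT _ (projT1 a) (F1 h (projT2 a)).

Lemma germ_eq_map O O' (h : emb O O') (a b : germ O) :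
  germ_eq a b -> germ_eq (germ_map h a) (germ_map h b).
Proof. by case=> l [f [g fg]]; exists l, f, g; rewrite /= !D1_nat fg. Qed.

Lemma germ_map_id O (a : germ O) : germ_map (id_emb O) a = a.
Proof. by case: a => j x; rewrite /germ_map /=; case: (D0_functor j) => ->. Qed.

Lemma germ_map_comp O1 O2 O3 (f : emb O1 O2) (g : emb O2 O3) (a : germ O1) :
  germ_map (comp_emb g f) a = germ_map g (germ_map f a).
Proof. by case: a => j x; rewrite /germ_map /=; case: (D0_functor j) => _ ->. Qed.

Definition germ_class O (a : germ O) : set (germ O) := fun b => germ_eq b a.

Lemma germ_class_eq O (a b : germ O) : germ_class a = germ_class b <-> germ_eq a b.
Proof.
split=> ab; first by have : germ_class a a := germ_eq_refl a; rewrite ab.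
rewrite predeqE => c; split=> ?; first exact: germ_eq_trans ab.
exact: germ_eq_trans (germ_eq_sym ab).
Qed.

Definition germ_classes O := {C : set (germ O) | exists a, C = germ_class a}.

Definition class_repr O (C : germ_classes O) : germ O := sval (boolp.cid (svalP C)).

Lemma class_reprK O (C : germ_classes O) : sval C = germ_class (class_repr C).
Proof. exact: svalP (boolp.cid (svalP C)). Qed.

Definition germ_quotient : psh Act :=
  @Psh Act germ_classes (fun O O' h C =>
    exist _ (germ_class (germ_map h (class_repr C))) (ex_intro _ _ erefl)).

Lemma germ_quotient_functor : is_functor germ_quotient.
Proof.
split=> [O C|O1 O2 O3 f g C]; apply: sig_eq; first by rewrite /= germ_map_id class_reprK.
apply/germ_class_eq; rewrite germ_map_comp; apply/germ_eq_sym/germ_eq_map.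
by apply/germ_class_eq; rewrite -class_reprK.
Qed.

Definition germ_proj j : nat_tr (D0 D j) germ_quotient :=
  fun O x => exist _ (germ_class (existT _ j x : germ O)) (ex_intro _ _ erefl).

Lemma germ_proj_cocone : is_cocone D germ_quotient germ_proj.
Proof.
split=> [j O O' f x|j k f O x]; apply: sig_eq; apply/germ_class_eq.
  apply: (@germ_eq_map _ _ f (existT _ j x)).
  by apply/germ_class_eq; rewrite -class_reprK.
by exists k, (Defs.cid k), f; rewrite /= D1_id.
Qed.

(* The quotient of the germs by eventual equality is a cocone, so iota
   identifies no more than it does. *)
Lemma iota_eq_germ_eq O j k (x : D0 D j O) (y : D0 D k O) :
  iota j O x = iota k O y -> germ_eq (existT _ j x : germ O) (existT _ k y).
Proof.
move=> iota_xy.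
have [[u [_ iota_u]] _] :=
  iota_colimit.2 _ _ germ_quotient_functor germ_proj_cocone.
have : germ_proj x = germ_proj y by rewrite -!iota_u iota_xy.
by move=> /(congr1 sval) /germ_class_eq.
Qed.

Lemma lmap_iota_eq (Lb : Type) O j k (t : Lb * D0 D j O) (t' : Lb * D0 D k O) :
  lmap (iota j O) t = lmap (iota k O) t' ->
  cospan_exists (fun l f g => lmap (D1 D f O) t = lmap (D1 D g O) t').
Proof.
case: t t' => a x [a' x'] [<-] /iota_eq_germ_eq [l [f [g fg]]].
by exists l, f, g; rewrite /lmap /= fg.
Qed.

Lemma iota_surj_seq (Lb : Type) O (s : seq (Lb * L O)) :
  exists j (s' : seq (Lb * D0 D j O)), map (lmap (iota j O)) s' = s.
Proof.
elim: s => [|[a y] s [j1 [s1 <-]]].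
  by have [[j] _] := J_filtered; exists j, [::].
have [j2 [x2 <-]] := iota_surj y.
have [_ [cocone _]] := J_filtered; have [c [[h1] [h2]]] := cocone j1 j2.
exists c, ((a, D1 D h2 O x2) :: map (lmap (D1 D h1 O)) s1).
rewrite /= {1}/lmap /= iota_cocone -map_comp; congr cons; apply: eq_map => t.
by rewrite /lmap /= iota_cocone.
Qed.

Lemma Bmap_iota_surj O (S : B L O) : exists j (S' : B (D0 D j) O), Bmap (iota j) O S' = S.
Proof.
case/finite_set_In: (svalP S) => s Ss.
have [j [s' s's]] := iota_surj_seq s.
have fin_s' : finite_set [set t | List.In t s'] by apply/finite_set_In; exists s'.
exists j, (exist _ _ fin_s'); apply: sig_eq.
by rewrite Bmap_val /= image_In_map s's Ss.
Qed.

Lemma Bmap_iota_eq O j k (S1 : B (D0 D j) O) (S2 : B (D0 D k) O) :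
  Bmap (iota j) O S1 = Bmap (iota k) O S2 ->
  exists l (f : chom j l) (g : chom k l), Bmap (D1 D f) O S1 = Bmap (D1 D g) O S2.
Proof.
move=> /(congr1 sval); rewrite !Bmap_val => iotaS12.
pose matched l (f : chom j l) (g : chom k l) (t : Lf Act O * D0 D j (delta O)) t' :=
  lmap (D1 D f (delta O)) t = lmap (D1 D g (delta O)) t'.
have matched_closed l f g m (h : chom l m) t t' :
    matched l f g t t' -> matched m (ccomp h f) (ccomp h g) t t'.
  by rewrite /matched /lmap !D1_comp; case=> -> ->.
pose fwd t l f g := exists2 t', sval S2 t' & matched l f g t t'.
pose bwd t' l f g := exists2 t, sval S1 t & matched l f g t t'.
have fwd_closed t : cospan_closed (fwd t).
  by move=> l f g m h [t' ? ?]; exists t'; last exact: matched_closed.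
have bwd_closed t' : cospan_closed (bwd t').
  by move=> l f g m h [t ? ?]; exists t; last exact: matched_closed.
have fwd_exists : cospan_exists (fun l f g => forall t, sval S1 t -> fwd t l f g).
  apply: (cospan_exists_all J_cat J_filtered (svalP S1) fwd_closed).
  move=> t /(image_eq_match iotaS12) [t' S2t'] /lmap_iota_eq [l [f [g fg]]].
  by exists l, f, g, t'.
have bwd_exists : cospan_exists (fun l f g => forall t', sval S2 t' -> bwd t' l f g).
  apply: (cospan_exists_all J_cat J_filtered (svalP S2) bwd_closed).
  move=> t' /(image_eq_match (esym iotaS12)) [t S1t] /esym /lmap_iota_eq [l [f [g fg]]].
  by exists l, f, g, t.
have [l [f [g [fwdfg bwdfg]]]] := cospan_exists_and J_cat J_filtered
  (cospan_closed_all fwd_closed) (cospan_closed_all bwd_closed) fwd_exists bwd_exists.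
exists l, f, g; apply: sig_eq; rewrite !Bmap_val.
rewrite predeqE => y; split=> [[t /fwdfg [t' S2t' tt'] <-]|[t' /bwdfg [t S1t tt'] <-]].
  by exists t'.
by exists t.
Qed.

Lemma B_preserves_colimit : is_colimit (Bdiag D) (B L) (fun j => Bmap (iota j)).
Proof.
split.
  split=> [j|j k f O S]; first by apply: Bmap_nat; exact: iota_nat.
  by rewrite /= Bmap_comp; apply: Bmap_ext => x; exact: iota_cocone.
move=> M mu _ [mu_nat mu_cocone].
have mu_compat O j k S1 S2 :
    Bmap (iota j) O S1 = Bmap (iota k) O S2 -> mu j O S1 = mu k O S2.
  case/Bmap_iota_eq=> l [f [g fg]].
  by rewrite -(mu_cocone _ _ f) -(mu_cocone _ _ g) /= fg.
have lift O (S : B L O) :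
    {j : cob J & {S' : B (D0 D j) O | Bmap (iota j) O S' = S}}.
  by case: (boolp.cid (Bmap_iota_surj S)) => j /boolp.cid S'; exists j.
pose u : nat_tr (B L) M := fun O S => mu _ O (sval (projT2 (lift O S))).
have u_iota j O S' : u O (Bmap (iota j) O S') = mu j O S'.
  by rewrite /u; case: (lift _ _) => j' [S1 S1S'] /=; exact: mu_compat.
split=> [|v w _ _ v_iota w_iota O S].
  exists u; split=> // O O' h S; have [j [S' <-]] := Bmap_iota_surj S.
  by rewrite -(Bmap_nat (@iota_nat j)) !u_iota mu_nat.
by have [j [S' <-]] := Bmap_iota_surj S; rewrite v_iota w_iota.
Qed.

End FilteredColimit.

Theorem proposition7 (Act : finType) :
  B_preserves_filtered_colimits Act /\ B_covers_pullbacks Act.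
Proof.
split; last exact: B_covers.
move=> J D L iota J_cat J_filtered D_diagram L_functor iota_colimit.
exact: B_preserves_colimit.
Qed.
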